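(* If a metric space $(X,d_X)$ contains a sequence of $n$-dimensional dilated cubes $f_m\colon\{0,1,\dots,k_m\}^n\to X$ with $\lim_{m\to\infty}k_m=\infty$, then $\operatorname{asdim}_{AN}(X,d_X)\ge n$.
   Context: An $n$-dimensional dilated cube in $(X,d_X)$ is a map $f\colon\{0,\dots,k\}^n\to X$ such that for some constant $C\ge1$, $d_X(f(x),f(y))=C\|x-y\|_1$ for all $x,y$ ($\ell_1$-norm). For $s>0$, an $s$-scale chain is a finite sequence $x_0,\dots,x_m$ with $d(x_i,x_{i+1})<s$; the $s$-scale connected components of a subset $U$ are the classes of the relation ''joined by an $s$-scale chain inside $U$''. A nondecreasing $D\colon\mathbb{R}_+\to\mathbb{R}_+$ is an $n$-dimensional control function of $X$ if for every $s>0$ there is a cover $\{\mathcal U_0,\dots,\mathcal U_n\}$ of $X$ whose members have $s$-scale connected components of diameter at most $D(s)$. $\operatorname{asdim}_{AN}(X)$ is the least $n$ such that $X$ has an $n$-dimensional control function of the form $D(s)=Cs+k$ ($C>0$, $k\in\mathbb{R}$), or $\infty$ if none exists. *)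

From Stdlib Require Import Reals List.
Open Scope R_scope.

Record is_metric {X : Type} (d : X -> X -> R) : Prop := {
  metric_nonneg : forall x y, 0 <= d x y;
  metric_zero_iff : forall x y, d x y = 0 <-> x = y;
  metric_sym : forall x y, d x y = d y x;
  metric_triangle : forall x y z, d x z <= d x y + d y z
}.

(* Points of {0,...,k}^n are represented as functions nat -> nat whose first
   n coordinates are <= k (other coordinates are irrelevant). *)
Definition in_cube (n k : nat) (x : nat -> nat) : Prop :=
  forall i, (i < n)%nat -> (x i <= k)%nat.

Fixpoint l1_dist (n : nat) (x y : nat -> nat) : R :=
  match n with
  | O => 0
  | S n' => l1_dist n' x y + Rabs (INR (x n') - INR (y n'))
  end.

Definition dilated_cube {X : Type} (d : X -> X -> R) (n k : nat)
    (f : (nat -> nat) -> X) : Prop :=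
  exists C : R, 1 <= C /\
    forall x y, in_cube n k x -> in_cube n k y ->
      d (f x) (f y) = C * l1_dist n x y.

Definition s_chain_in {X : Type} (d : X -> X -> R) (s : R) (U : X -> Prop)
    (x y : X) : Prop :=
  exists (l : list X),
    let p := x :: l in
    (forall z, List.In z p -> U z) /\
    List.last p x = y /\
    (forall i, (S i < length p)%nat ->
       d (List.nth i p x) (List.nth (S i) p x) < s).

Definition s_components_bounded {X : Type} (d : X -> X -> R) (s : R)
    (U : X -> Prop) (D : R) : Prop :=
  forall x y, U x -> U y -> s_chain_in d s U x y -> d x y <= D.

Definition control_function {X : Type} (d : X -> X -> R) (n : nat)
    (D : R -> R) : Prop :=
  (forall s t, 0 < s -> s <= t -> D s <= D t) /\
  forall s, 0 < s ->
    exists U : nat -> X -> Prop,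
      (forall x, exists i, (i <= n)%nat /\ U i x) /\
      (forall i, (i <= n)%nat -> s_components_bounded d s (U i) (D s)).

Definition asdimAN_le {X : Type} (d : X -> X -> R) (n : nat) : Prop :=
  exists C k : R, 0 < C /\ control_function d n (fun s => C * s + k).

Definition asdimAN_ge {X : Type} (d : X -> X -> R) (n : nat) : Prop :=
  forall m, (m < n)%nat -> ~ asdimAN_le d m.

From Stdlib Require Import Reals Lra Lia Psatz List ClassicalEpsilon Classical_Prop.

(* Suppose asdim_AN(X) <= m < n via the control function s |-> C's + k0, and
   take a dilated cube f : {0..K}^n -> X of constant C >= 1 whose side K
   exceeds C'(n+1) + |k0|.  At the scale s = C(n+1) the cover {U_0..U_m}
   colours each point of X, hence each point of the cube, with fewer than n
   colours.  King-adjacent points of the cube (coordinates differing by at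
   most one) are mapped at distance <= C n < s, so a monochromatic king-path
   becomes an s-chain in one U_c.  By the n-dimensional Hex theorem some
   colour has a king-path between opposite faces x_j = K and x_j = 0; its ends
   are C K > C's + k0 apart yet lie in one s-component of U_c.

   The combinatorial core, module [CubeHex], proves the Hex theorem from
   Kuhn's cubical Sperner lemma (a Sperner labelling of the Kuhn triangulation
   of {0..K+1}^N has an odd number of fully labelled simplices), itself proved
   by the door-to-door parity argument and induction on N. *)

Inductive king_path (n K : nat) (col : (nat -> nat) -> nat) (c : nat) :
    (nat -> nat) -> (nat -> nat) -> Prop :=
 | king_path0 x : in_cube n K x -> col x = c -> king_path n K col c x x
 | king_pathS x y z : in_cube n K x -> col x = c ->
     (forall i, (i < n)%nat -> (x i <= y i + 1)%nat /\ (y i <= x i + 1)%nat) ->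
     king_path n K col c y z -> king_path n K col c x z.

Module CubeHex.
From mathcomp Require Import all_boot all_fingroup.
Set Implicit Arguments. Unset Strict Implicit. Unset Printing Implicit Defensive.
Local Open Scope nat_scope.

Lemma val_ordS n (i : 'I_n) : (ordS i : nat) = if i.+1 == n then 0 else i.+1.
Proof.
case: i => m lt /=; case: eqP => [->|h]; first by rewrite modnn.
by rewrite modn_small // ltn_neqAle lt andbT; apply/eqP.
Qed.

Lemma val_ord_pred n (i : 'I_n) :
  (ord_pred i : nat) = if i == 0 :> nat then n.-1 else i.-1.
Proof.
case: i => [[|m] lt] /=; first by rewrite add0n modn_small // prednK.
by rewrite modnDr modn_small // ltnW.
Qed.

(* An involution of a finite set has as many fixed points as elements, mod 2:
   the non-fixed points come in pairs.  This is the parity principle behind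
   the door-to-door argument. *)
Lemma odd_card_fixpoints (T : finType) (A : {set T}) (f : T -> T) :
  {in A, forall a, f a \in A} -> {in A, involutive f} ->
  odd #|A| = odd #|[set a in A | f a == a]|.
Proof.
move: {2}#|A| (leqnn #|A|) => m; elim: m A => [|m IH] A.
  rewrite leqn0 => /eqP/cards0_eq -> _ _.
  rewrite (_ : [set a in set0 | _] = set0) ?cards0 //.
  by apply/setP => x; rewrite !inE.
move=> hA fA ffA.
have [/existsP [a /andP [aA fa]] | ] := boolP [exists a in A, f a != a].
  pose B := A :\ a :\ f a.
  have faA := fA a aA.
  have cA : #|A| = #|B|.+2.
    by rewrite /B (cardsD1 a A) aA (cardsD1 (f a) (A :\ a)) !inE faA fa.
  have fB : {in B, forall b, f b \in B}.
    move=> b; rewrite !inE => /and3P [bfa ba bA]; rewrite fA // andbT.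
    apply/andP; split.
      by apply: contra ba => /eqP h; rewrite -(ffA b bA) h (ffA a aA).
    by apply: contra bfa => /eqP h; rewrite -(ffA b bA) h.
  have ffB : {in B, involutive f} by move=> b; rewrite !inE => /and3P [_ _ /ffA].
  have hB : #|B| <= m by rewrite -ltnS -ltnS -cA (leqW hA).
  rewrite cA /= negbK (IH B hB fB ffB); congr (odd _); apply: eq_card => x.
  rewrite !inE; case: (eqVneq (f x) x) => fx; rewrite ?andbF ?andbT //.
  case: (eqVneq x (f a)) => [xfa|] /=.
    by move: fx; rewrite xfa (ffA a aA) => h; rewrite -h eqxx in fa.
  case: (eqVneq x a) => [xa|] //=.
  by rewrite xa in fx; rewrite fx eqxx in fa.
rewrite negb_exists => /forallP h; congr (odd _); apply: eq_card => x.
by rewrite !inE; case xA: (x \in A) => //=; have := h x; rewrite xA /= negbK => ->.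
Qed.

Lemma onto_larger_inj (T U : finType) (A : {set T}) (f : T -> U) (B : {set U}) :
  #|A| <= #|B| -> B \subset f @: A -> {in A &, injective f}.
Proof.
move=> cAB sB; apply/imset_injP; rewrite eqn_leq leq_imset_card /=.
exact: leq_trans cAB (subset_leq_card sB).
Qed.

Local Open Scope group_scope.

Section Kuhn.
Variable K : nat.

(* A Kuhn simplex of the grid {0..K+1}^N: a base point [s.1] with coordinates
   at most K and an ordering [s.2] of the axes. *)
Definition simplex N := ({ffun 'I_N -> 'I_K.+1} * {perm 'I_N})%type.

Definition vertex N (s : simplex N) (t : nat) : {ffun 'I_N -> nat} :=
  [ffun i => (s.1 i : nat) + (nat_of_ord (s.2 i) < t)].

Definition in_grid N (p : {ffun 'I_N -> nat}) := forall i, p i <= K.+1.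

Definition fully_labelled N (lab : {ffun 'I_N -> nat} -> nat) (s : simplex N) :=
  [forall i : 'I_N.+1, [exists t : 'I_N.+1, lab (vertex s t) == i]].

Definition sperner N (lab : {ffun 'I_N -> nat} -> nat) :=
  [/\ (forall p, in_grid p -> lab p <= N),
      (forall p (i : 'I_N), in_grid p -> p i = 0 -> lab p <> i.+1) &
      (forall p (i : 'I_N), in_grid p -> p i = K.+1 -> lab p <> 0)].

Lemma vertex_in_grid N (s : simplex N) t : in_grid (vertex s t).
Proof.
move=> i; rewrite ffunE; have := ltn_ord (s.1 i).
by case: (_ < t) => /=; rewrite ?addn1 ?addn0 // => /ltnW.
Qed.

Section Step.
(* A door is a pair (s, j) whose facet opposite vertex j
   carries all labels 0..n.  Two involutions act on doors: [pivot] crosses the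
   facet into the adjacent simplex, and [swap] replaces j by the other vertex
   with the same label.  Fixed points of [swap] are the fully labelled
   simplices, fixed points of [pivot] the fully labelled simplices of the face
   p_n = 0; hence both counts have the parity of the number of doors. *)
Variable n : nat.
Local Notation N := n.+1.
Variable lab : {ffun 'I_N -> nat} -> nat.

Definition rot_down : {perm 'I_N} := perm (@ord_pred_inj N).
Definition rot_up : {perm 'I_N} := perm (@ordS_inj N).

Lemma rot_downK : rot_down * rot_up = 1.
Proof.
apply/permP => i; rewrite permM /rot_down /rot_up.
by rewrite (permE (@ord_pred_inj N)) (permE (@ordS_inj N)) ord_predK perm1.
Qed.

Lemma rot_upK : rot_up * rot_down = 1.
Proof.
apply/permP => i; rewrite permM /rot_down /rot_up.
by rewrite (permE (@ord_pred_inj N)) (permE (@ordS_inj N)) ordSK perm1.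
Qed.

Lemma rot_down_inv_max (r : {perm 'I_N}) : (r * rot_down)^-1 ord_max = r^-1 ord0.
Proof.
apply: (@perm_inj _ (r * rot_down)); rewrite permKV permM permKV.
by apply/val_inj; rewrite /rot_down /= (permE (@ord_pred_inj N)) val_ord_pred.
Qed.

Lemma rot_up_inv0 (r : {perm 'I_N}) : (r * rot_up)^-1 ord0 = r^-1 ord_max.
Proof.
apply: (@perm_inj _ (r * rot_up)); rewrite permKV permM permKV.
by apply/val_inj; rewrite /rot_up /= (permE (@ordS_inj N)) val_ordS /= eqxx.
Qed.

Definition raise (x : {ffun 'I_N -> 'I_K.+1}) c : {ffun 'I_N -> 'I_K.+1} :=
  [ffun i => inord (x i + (i == c))].
Definition lower (x : {ffun 'I_N -> 'I_K.+1}) c : {ffun 'I_N -> 'I_K.+1} :=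
  [ffun i => inord (x i - (i == c))].

Lemma raise_at (x : {ffun 'I_N -> 'I_K.+1}) c : x c < K -> (raise x c c : nat) = (x c).+1.
Proof. by move=> h; rewrite ffunE eqxx addn1 inordK. Qed.

Lemma lower_at (x : {ffun 'I_N -> 'I_K.+1}) c : 0 < x c -> (lower x c c : nat) = (x c).-1.
Proof.
move=> h; rewrite ffunE eqxx subn1 inordK //.
exact: leq_ltn_trans (leq_pred _) (ltn_ord _).
Qed.

Lemma lower_raise (x : {ffun 'I_N -> 'I_K.+1}) c : x c < K -> lower (raise x c) c = x.
Proof.
move=> h; apply/ffunP => i; apply/val_inj; rewrite ffunE.
have [->|ic] := eqVneq i c; first by rewrite raise_at // subn1 inord_val.
by rewrite ffunE (negbTE ic) !subn0 !addn0 !inord_val.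
Qed.

Lemma raise_lower (x : {ffun 'I_N -> 'I_K.+1}) c : 0 < x c -> raise (lower x c) c = x.
Proof.
move=> h; apply/ffunP => i; apply/val_inj; rewrite ffunE.
have [->|ic] := eqVneq i c; first by rewrite lower_at // addn1 prednK // inord_val.
by rewrite ffunE (negbTE ic) !subn0 !addn0 !inord_val.
Qed.

(* The simplex across the facet opposite vertex j, together with the index
   of its vertex opposite that facet; (s, j) itself if the facet lies on the
   boundary of the grid. *)
Definition pivot (sj : simplex N * 'I_N.+1) : simplex N * 'I_N.+1 :=
  let: (s, j) := sj in let: (x, r) := s in
  if (j : nat) == 0 then
    let c := (r^-1 : {perm 'I_N}) ord0 in
    if x c < K then ((raise x c, r * rot_down), ord_max) else sj
  else if (j : nat) == N then
    let c := (r^-1 : {perm 'I_N}) ord_max in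
    if 0 < x c then ((lower x c, r * rot_up), ord0) else sj
  else ((x, r * tperm (inord j.-1) (inord j)), j).

Definition door (sj : simplex N * 'I_N.+1) :=
  [forall i : 'I_N, [exists t : 'I_N.+1,
     (t != sj.2) && (lab (vertex sj.1 t) == i)]].

Lemma pivot_invol : involutive pivot.
Proof.
case=> [[x r] j]; rewrite {2}/pivot.
have [j0|jn0] := eqVneq (j : nat) 0.
  case: ifP => hx; last by rewrite /pivot j0 eqxx hx.
  rewrite /pivot /= rot_down_inv_max raise_at // ltn0Sn.
  rewrite eqxx lower_raise // -mulgA rot_downK mulg1.
  by congr pair; apply/val_inj.
have [jN|jnN] := eqVneq (j : nat) N.
  case: ifP => hx; last by rewrite /pivot jN eqxx hx.
  rewrite /pivot /= rot_up_inv0 lower_at //.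
  rewrite -ltnS prednK // ltn_ord raise_lower // -mulgA rot_upK mulg1.
  by congr pair; apply/val_inj.
rewrite /pivot (negbTE jn0) (negbTE jnN) -mulgA.
by rewrite tperm2 mulg1.
Qed.

Lemma vertex_raise (x : {ffun 'I_N -> 'I_K.+1}) (r : {perm 'I_N}) (t : nat) :
  x (r^-1 ord0) < K -> t < N ->
  vertex (raise x (r^-1 ord0), r * rot_down) t = vertex (x, r) t.+1.
Proof.
move=> hx ht; apply/ffunP => i; rewrite !ffunE /= permM /rot_down.
rewrite (permE (@ord_pred_inj N)) val_ord_pred inordK; last first.
  by case: eqP => [->|_]; rewrite ?addn1 // addn0 ltnS -ltnS.
have [->|hi] := eqVneq i (r^-1 ord0).
  by rewrite permKV /= addn1 ltnNge -ltnS ht addn0 -addn1.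
have ri : (r i : nat) != 0.
  apply: contra hi => /eqP h; apply/eqP; rewrite -(permK r i).
  by congr (r^-1 _); apply: val_inj.
by rewrite (negbTE ri) addn0 -[in RHS](prednK (neq0_lt0n (negbTE ri))) ltnS.
Qed.

Lemma vertex_lower (x : {ffun 'I_N -> 'I_K.+1}) (r : {perm 'I_N}) (t : nat) :
  0 < x (r^-1 ord_max) -> t < N ->
  vertex (lower x (r^-1 ord_max), r * rot_up) t.+1 = vertex (x, r) t.
Proof.
move=> hx ht; apply/ffunP => i; rewrite !ffunE /= permM /rot_up.
rewrite (permE (@ordS_inj N)) val_ordS inordK; last first.
  exact: leq_ltn_trans (leq_subr _ _) (ltn_ord _).
have [->|hi] := eqVneq i (r^-1 ord_max).
  by rewrite permKV /= eqxx /= ltnNge -ltnS ht addn0 subnK.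
have ri : (r i : nat) != n.
  apply: contra hi => /eqP h; apply/eqP; rewrite -(permK r i).
  by congr (r^-1 _); apply: val_inj.
by rewrite eqSS (negbTE ri) subn0 ltnS.
Qed.

Lemma tperm_lt (a b p : 'I_N) (t : nat) :
  (a : nat) = b.-1 -> 0 < b -> t != b -> (tperm a b p < t) = (p < t).
Proof.
move=> hab hb htb.
have key : (b.-1 < t) = (b < t).
  move: htb; case: (nat_of_ord b) hb => // b' _ /= h.
  by rewrite -[b' < t]/(b'.+1 <= t) leq_eqVlt eq_sym (negbTE h).
rewrite permE /=; have [->|hpa] := eqVneq p a; first by rewrite hab key.
by have [->|hpb] := eqVneq p b; rewrite // hab key.
Qed.

Lemma vertex_swap_axes (x : {ffun 'I_N -> 'I_K.+1}) (r : {perm 'I_N}) (j t : nat) :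
  0 < j -> j < N -> t != j ->
  vertex (x, r * tperm (inord j.-1) (inord j)) t = vertex (x, r) t.
Proof.
move=> hj0 hjN htj; apply/ffunP => i; rewrite !ffunE /= permM.
by rewrite tperm_lt // ?inordK //; apply: leq_ltn_trans (leq_pred _) hjN.
Qed.

Lemma door_transfer (s s' : simplex N) (j j' : 'I_N.+1) :
  (forall t : 'I_N.+1, t != j ->
     exists t' : 'I_N.+1, t' != j' /\ vertex s' t' = vertex s t) ->
  door (s, j) -> door (s', j').
Proof.
move=> h /forallP d; apply/forallP => i.
have /existsP [t /andP [tj /eqP lt]] := d i; have [t' [t'j e]] := h t tj.
by apply/existsP; exists t'; rewrite t'j e lt /=.
Qed.

Lemma pivot_door sj : door sj -> door (pivot sj).
Proof.
case: sj => [[x r] j] /=.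
have [j0|jn0] := eqVneq (j : nat) 0.
  case: ifP => // hx; apply: door_transfer => t tj.
  have t0 : 0 < t.
    by rewrite lt0n; apply: contra tj => /eqP h; apply/eqP/val_inj; rewrite /= h j0.
  have tN : t.-1 < N by rewrite -ltnS prednK // ltn_ord.
  exists (inord t.-1); rewrite inordK ?(leqW tN) // vertex_raise // prednK //.
  split => //; apply/eqP => /(congr1 val) /=.
  by rewrite inordK ?(leqW tN) // => h; rewrite h ltnn in tN.
have [jN|jnN] := eqVneq (j : nat) N.
  case: ifP => // hx; apply: door_transfer => t tj.
  have tN : t < N.
    rewrite ltn_neqAle -ltnS ltn_ord andbT; apply: contra tj => /eqP h.
    by apply/eqP/val_inj; rewrite /= h jN.
  exists (inord t.+1); rewrite inordK // vertex_lower //; split => //.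
  by apply/eqP => /(congr1 val) /=; rewrite inordK.
apply: door_transfer => t tj; exists t; split => //.
apply: vertex_swap_axes => //; first by rewrite lt0n.
by rewrite ltn_neqAle jnN -ltnS ltn_ord.
Qed.

Hypothesis lab_sperner : sperner lab.

(* The fixed doors of [pivot] are exactly the doors on the face p_n = 0: the
   facet opposite the last vertex, with axis n raised last and x_n = 0.  On
   any other boundary facet the missing label would violate Sperner's
   conditions, and interior facets are always crossed. *)
Lemma door_first_inner (x : {ffun 'I_N -> 'I_K.+1}) r (j : 'I_N.+1) :
  (j : nat) = 0 -> door ((x, r), j) -> x (r^-1 ord0) < K.
Proof.
case: lab_sperner => _ _ H3 j0 /forallP d; apply/negPn/negP => hx.
have /existsP [t /andP [tj /eqP lt]] := d ord0.
set c := r^-1 ord0 in hx.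
have t0 : 0 < t.
  by rewrite lt0n; apply: contra tj => /eqP h; apply/eqP/val_inj; rewrite /= h j0.
have : vertex (x, r) t c = K.+1.
  rewrite ffunE /= permKV /= t0 addn1; congr S; apply/eqP.
  by have := ltn_ord (x c); rewrite ltnS => h; rewrite eqn_leq h leqNgt hx.
by move/(H3 _ _ (vertex_in_grid _ _)); rewrite lt.
Qed.

Lemma door_last_boundary (x : {ffun 'I_N -> 'I_K.+1}) r (j : 'I_N.+1) :
  (j : nat) = N -> door ((x, r), j) -> ~~ (0 < x (r^-1 ord_max)) ->
  r ord_max = ord_max /\ (x ord_max : nat) = 0.
Proof.
case: lab_sperner => _ H2 _ jN /forallP d hx.
set c := r^-1 ord_max in hx.
have rc : r c = ord_max by rewrite permKV.
have xc : (x c : nat) = 0 by apply/eqP; rewrite -leqn0 leqNgt.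
suff cm : c = ord_max by rewrite -cm rc -cm xc.
apply/eqP/negPn/negP => cn.
have cl : c.+1 < N by rewrite ltnS ltn_neqAle -ltnS ltn_ord andbT.
have /existsP [t /andP [tj /eqP lt]] := d (Ordinal cl).
have tn : t <= n.
  rewrite -ltnS ltn_neqAle -ltnS ltn_ord andbT; apply: contra tj => /eqP h.
  by apply/eqP/val_inj; rewrite /= h jN.
have : vertex (x, r) t c = 0 by rewrite ffunE /= rc xc /= ltnNge tn.
by move/(H2 _ _ (vertex_in_grid _ _)); rewrite lt.
Qed.

Lemma pivot_moves_inner (x : {ffun 'I_N -> 'I_K.+1}) r (j : 'I_N.+1) :
  (j : nat) != 0 -> (j : nat) != N -> pivot ((x, r), j) != ((x, r), j).
Proof.
move=> jn0 jnN; rewrite /pivot (negbTE jn0) (negbTE jnN); apply/eqP.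
move=> /(congr1 (fun q : simplex N * 'I_N.+1 => (r^-1 * q.1.2) (inord j.-1))).
rewrite /= mulKg mulVg perm1 permE /= eqxx => /(congr1 val).
have jl : j < N by rewrite ltn_neqAle jnN -ltnS ltn_ord.
rewrite /= !inordK //; last exact: leq_ltn_trans (leq_pred _) jl.
by move=> h; move: (jn0); rewrite -lt0n -ltn_predL -h ltnn.
Qed.

Lemma fixed_door sj : door sj -> pivot sj = sj ->
  [/\ sj.2 = ord_max, sj.1.2 ord_max = ord_max & (sj.1.1 ord_max : nat) = 0].
Proof.
case: sj => [[x r] j] /= dj; have [j0|jn0] := eqVneq (j : nat) 0.
  by rewrite /pivot /= (door_first_inner j0 dj) => /(congr1 (val \o snd)) /=; rewrite j0.
have [jN|jnN] := eqVneq (j : nat) N; last first.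
  move=> pj; move: (pivot_moves_inner x r jn0 jnN).
  by rewrite /pivot /= (negbTE jn0) (negbTE jnN) pj eqxx.
rewrite /pivot /=; case: ifP => hx.
  by move=> /(congr1 (val \o snd)) /=; rewrite jN.
have [rm xm] := door_last_boundary jN dj (negbT hx).
by split => //; apply/val_inj; rewrite /= jN.
Qed.

(* The face p_n = 0 of the grid, viewed as the grid of dimension n. *)
Definition extend0 (p : {ffun 'I_n -> nat}) : {ffun 'I_N -> nat} :=
  [ffun i => if unlift ord_max i is Some i' then p i' else 0].

Definition embed_face (s' : simplex n) : simplex N :=
  ([ffun i => if unlift ord_max i is Some i' then s'.1 i' else ord0],
   lift_perm ord_max ord_max s'.2).

Definition face_label (p : {ffun 'I_n -> nat}) := lab (extend0 p).

Lemma val_lift_max (i : 'I_n) : (lift ord_max i : nat) = i.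
Proof. by rewrite /= /bump leqNgt ltn_ord. Qed.

Lemma vertex_embed_face (s' : simplex n) (t : nat) :
  t <= n -> vertex (embed_face s') t = extend0 (vertex s' t).
Proof.
move=> tn; apply/ffunP => i; rewrite !ffunE /=.
case: (unliftP ord_max i) => [i'|] ->.
  by rewrite ffunE lift_perm_lift val_lift_max.
by rewrite lift_perm_id /= ltnNge tn.
Qed.

Lemma extend0_in_grid p : in_grid p -> in_grid (extend0 p).
Proof. by move=> h i; rewrite ffunE; case: (unlift _ _). Qed.

(* Sperner's conditions pass to the face; in particular the label N = n+1 is
   absent from it, so [face_label] takes values in 0..n. *)
Lemma face_label_sperner : sperner face_label.
Proof.
case: lab_sperner => H1 H2 H3; split.
- move=> p cp; have := H1 _ (extend0_in_grid cp).
  rewrite leq_eqVlt ltnS => /orP [/eqP e|//]; exfalso.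
  by apply: (H2 (extend0 p) ord_max (extend0_in_grid cp)); rewrite ?ffunE ?unlift_none.
- move=> p i cp pi; have := H2 (extend0 p) (lift ord_max i) (extend0_in_grid cp).
  by rewrite ffunE liftK val_lift_max /face_label => h; apply: h.
- move=> p i cp pi; have := H3 (extend0 p) (lift ord_max i) (extend0_in_grid cp).
  by rewrite ffunE liftK /face_label => h; apply: h.
Qed.

Lemma perm_fixing_max_lift (r : {perm 'I_N}) : r ord_max = ord_max ->
  exists q : {perm 'I_n}, lift_perm ord_max ord_max q = r.
Proof.
move=> rm.
have hS (k : 'I_n) : {k' | r (lift ord_max k) = lift ord_max k'}.
  case: (unliftP ord_max (r (lift ord_max k))) => [k' ->|e]; first by exists k'.
  have : r (lift ord_max k) = r ord_max by rewrite rm.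
  by move/perm_inj/eqP; rewrite eq_sym (negbTE (neq_lift _ _)).
pose g k := sval (hS k).
have gE k : r (lift ord_max k) = lift ord_max (g k) by rewrite /g; case: (hS k).
have ginj : injective g.
  by move=> a b e; apply: (@lift_inj _ ord_max); apply: (@perm_inj _ r); rewrite !gE e.
exists (perm ginj); apply/permP => i; case: (unliftP ord_max i) => [i'|] ->.
  by rewrite lift_perm_lift permE gE.
by rewrite lift_perm_id rm.
Qed.

Lemma embed_face_inj : injective embed_face.
Proof.
move=> [y q] [y' q'] /= [ey eq]; congr pair.
  by apply/ffunP => i; move/ffunP: ey => /(_ (lift ord_max i)); rewrite !ffunE liftK.
apply/permP => i; move/permP: eq => /(_ (lift ord_max i)).
by rewrite !lift_perm_lift => /lift_inj.
Qed.

Definition doors := [set sj | door sj].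

Lemma pivot_fixed_doors :
  [set sj in doors | pivot sj == sj] =
  [set (embed_face s', ord_max) | s' in [set s' | fully_labelled face_label s']].
Proof.
apply/setP => [[s j]]; rewrite !inE; apply/idP/idP.
  case/andP => ds /eqP fs; have [/= jm rm xm] := fixed_door ds fs.
  case: s ds fs rm xm jm => x r ds fs rm xm jm.
  have [q eq] := perm_fixing_max_lift rm.
  pose y : {ffun 'I_n -> 'I_K.+1} := [ffun i => x (lift ord_max i)].
  have ph : embed_face (y, q) = (x, r).
    rewrite /embed_face /= eq; congr pair; apply/ffunP => i; rewrite !ffunE.
    case: (unliftP ord_max i) => [i'|] ->; first by rewrite ffunE.
    by apply/val_inj; rewrite /= xm.
  apply/imsetP; exists (y, q); last by rewrite ph jm.
  rewrite inE; apply/forallP => i.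
  move/forallP: ds => /(_ i) /existsP [t /andP [tj /eqP lt]].
  have tn : t <= n.
    rewrite -ltnS ltn_neqAle -ltnS ltn_ord andbT; apply: contra tj => /eqP h.
    by apply/eqP/val_inj; rewrite /= h jm.
  by apply/existsP; exists (inord t); rewrite inordK // /face_label -vertex_embed_face // ph lt.
case/imsetP => s' hs' [-> ->]; apply/andP; split; last first.
  rewrite /pivot /= eqxx.
  have -> : (lift_perm ord_max ord_max s'.2)^-1 ord_max = ord_max.
    by apply: (@perm_inj _ (lift_perm ord_max ord_max s'.2)); rewrite permKV lift_perm_id.
  by rewrite ffunE unlift_none ltnn.
rewrite inE in hs'; apply/forallP => i.
move/forallP: hs' => /(_ i) /existsP [t /eqP lt].
apply/existsP; exists (widen_ord (leqnSn _) t); apply/andP; split.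
  by rewrite -val_eqE /= neq_ltn ltn_ord.
by rewrite /= vertex_embed_face; [apply/eqP; exact: lt | exact: ltn_ord t].
Qed.

Lemma card_pivot_fixed :
  #|[set sj in doors | pivot sj == sj]| = #|[set s' | fully_labelled face_label s']|.
Proof.
rewrite pivot_fixed_doors card_in_imset // => a b _ _ /(congr1 fst) /=.
exact: embed_face_inj.
Qed.

Definition swap (sj : simplex N * 'I_N.+1) : simplex N * 'I_N.+1 :=
  let: (s, j) := sj in
  if [pick t | (t != j) && (lab (vertex s t) == lab (vertex s j))] is Some t
  then (s, t) else (s, j).

Lemma door_labels_inj s j : door (s, j) ->
  forall t1 t2 : 'I_N.+1, t1 != j -> t2 != j ->
  lab (vertex s t1) = lab (vertex s t2) -> t1 = t2.
Proof.
move=> /forallP d t1 t2 h1 h2 e.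
pose f (t : 'I_N.+1) : 'I_N.+1 := inord (lab (vertex s t)).
have : {in [set~ j] &, injective f}.
  apply: (@onto_larger_inj _ _ _ _ [set~ (@ord_max N)]); first by rewrite !cardsC1.
  apply/subsetP => i; rewrite !inE -val_eqE => hi.
  have il : i < N by rewrite ltn_neqAle hi -ltnS ltn_ord.
  have /existsP [t /andP [tj /eqP lt]] := d (Ordinal il).
  apply/imsetP; exists t; first by rewrite !inE.
  by apply/val_inj; rewrite /f /= lt inordK // ltnW.
by apply; rewrite ?inE // /f e.
Qed.

Lemma swap_door sj : door sj -> door (swap sj).
Proof.
case: sj => s j /= dj; case: pickP => // t /andP [tj /eqP lt].
apply/forallP => i; move/forallP: dj => /(_ i) /existsP [u /andP [uj /eqP lu]].
apply/existsP; have [ut|ut] := eqVneq u t.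
  by exists j; rewrite /= eq_sym tj /= -lt -lu ut.
by exists u; rewrite ut lu eqxx.
Qed.

Lemma swapP (s : simplex N) (j : 'I_N.+1) :
  (exists t : 'I_N.+1,
     [/\ t != j, lab (vertex s t) = lab (vertex s j) & swap (s, j) = (s, t)]) \/
  ((forall t : 'I_N.+1, t != j -> lab (vertex s t) <> lab (vertex s j)) /\
   swap (s, j) = (s, j)).
Proof.
rewrite /swap; case: pickP => [t /andP [tj /eqP lt]|hn]; first by left; exists t.
by right; split => // t tj lt; have := hn t; rewrite tj lt eqxx.
Qed.

Lemma swap_invol sj : door sj -> swap (swap sj) = sj.
Proof.
case: sj => s j dj.
have [[t [tj lt ->]] | [_ e]] := swapP s j; last by rewrite !e.
have dt : door (s, t).
  have := swap_door dj; rewrite /swap; case: pickP => [u /andP [uj /eqP lu]|/(_ t)].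
    by rewrite -(door_labels_inj dj uj tj (etrans lu (esym lt))).
  by rewrite tj lt eqxx.
have [[u [ut lu ->]] | [hn _]] := swapP s t.
  by congr pair; apply: (door_labels_inj dt ut _ (etrans lu lt)); rewrite eq_sym.
by exfalso; apply: (hn j); rewrite 1?eq_sym // lt.
Qed.

Lemma swap_fixed_label s j :
  door (s, j) -> swap (s, j) = (s, j) -> lab (vertex s j) = N.
Proof.
case: lab_sperner => H1 _ _ dj.
have [[t [tj lt ->]] | [hn _]] := swapP s j.
  by move=> [] /eqP; rewrite (negbTE tj).
move=> _; have hb := H1 _ (vertex_in_grid s j).
apply/eqP; rewrite eqn_leq hb /= ltnNge -ltnS.
apply/negP => hl; move/forallP: dj => /(_ (Ordinal hl)) /existsP [t /andP [tj /eqP lt]].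
exact: (hn t tj).
Qed.

Lemma fully_labelled_inj s : fully_labelled lab s ->
  injective (fun t : 'I_N.+1 => lab (vertex s t)).
Proof.
move=> fs t1 t2 e; pose f (t : 'I_N.+1) : 'I_N.+1 := inord (lab (vertex s t)).
have : {in [set: 'I_N.+1] &, injective f}.
  apply: (@onto_larger_inj _ _ _ _ [set: 'I_N.+1]) => //.
  apply/subsetP => i _; have /existsP [u /eqP lu] := (forallP fs) i.
  by apply/imsetP; exists u; rewrite ?inE //; apply/val_inj; rewrite /f /= lu inordK.
by apply; rewrite ?inE // /f e.
Qed.

Lemma fully_labelled_fixed_door s (j : 'I_N.+1) : fully_labelled lab s ->
  lab (vertex s j) = N -> door (s, j) /\ swap (s, j) = (s, j).
Proof.
move=> fs lj; split.
  apply/forallP => i; have /existsP [t /eqP lt] := (forallP fs) (widen_ord (leqnSn _) i).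
  apply/existsP; exists t; rewrite lt eqxx andbT.
  apply/negP => /eqP tj; move: lt; rewrite tj lj /= => e.
  by move: (ltn_ord i); rewrite -e ltnn.
have [[t [tj lt _]] | [_ ->]] := swapP s j => //.
by move: tj; rewrite (fully_labelled_inj fs lt) eqxx.
Qed.

Lemma swap_fixed_doors :
  [set s | fully_labelled lab s] = fst @: [set sj in doors | swap sj == sj].
Proof.
apply/setP => s; rewrite inE; apply/idP/imsetP.
  move=> fs; have /existsP [j /eqP lj] := (forallP fs) ord_max.
  have [dj sj] := fully_labelled_fixed_door fs lj.
  by exists (s, j); rewrite // !inE dj sj eqxx.
case=> [[s' j]]; rewrite !inE /= => /andP [dj /eqP sj] ->.
apply/forallP => i; apply/existsP.
have [iN|iN] := eqVneq (i : nat) N.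
  by exists j; rewrite (swap_fixed_label dj sj) iN.
have il : i < N by rewrite ltn_neqAle iN -ltnS ltn_ord.
by move/forallP: dj => /(_ (Ordinal il)) /existsP [t /andP [_ lt]]; exists t.
Qed.

Lemma card_swap_fixed :
  #|[set sj in doors | swap sj == sj]| = #|[set s | fully_labelled lab s]|.
Proof.
rewrite swap_fixed_doors card_in_imset //.
move=> [s j] [s' j']; rewrite !inE /= => /andP [dj /eqP sj] /andP [dj' /eqP sj'] e.
subst s'; congr pair; apply/eqP/negP => /negP jj.
have [[t [tj lt e]] | [hn _]] := swapP s j.
  by move: (etrans (esym e) sj) => [] /eqP; rewrite (negbTE tj).
by apply: (hn j'); rewrite 1?eq_sym // (swap_fixed_label dj sj) (swap_fixed_label dj' sj').
Qed.

End Step.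

(* The induction step: the numbers of fully labelled simplices of the grid and
   of its face p_n = 0 have the same parity as the number of doors. *)
Lemma kuhn_step n (lab : {ffun 'I_n.+1 -> nat} -> nat) : sperner lab ->
  odd #|[set s | fully_labelled lab s]| =
  odd #|[set s' | fully_labelled (face_label lab) s']|.
Proof.
move=> H; rewrite -card_swap_fixed // -odd_card_fixpoints; last first.
- by move=> a; rewrite inE => da; apply: swap_invol.
- by move=> a; rewrite !inE => da; apply: swap_door.
rewrite -card_pivot_fixed // -odd_card_fixpoints //.
- by move=> a; rewrite !inE => da; apply: pivot_door.
- by move=> a _; apply: pivot_invol.
Qed.

Theorem kuhn N (lab : {ffun 'I_N -> nat} -> nat) :
  sperner lab -> odd #|[set s | fully_labelled lab s]|.
Proof.
elim: N lab => [|n IH] lab H; last by rewrite kuhn_step //; apply/IH/face_label_sperner.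
have -> : [set s | fully_labelled lab s] = setT.
  apply/setP => s; rewrite !inE; apply/forallP => i; apply/existsP; exists ord0.
  case: H => H1 _ _; have := H1 (vertex s 0) (vertex_in_grid _ _).
  by rewrite leqn0 => /eqP ->; case: i => [[|m]].
by rewrite cardsT card_prod card_ffun card_Sn !card_ord expn0.
Qed.
End Kuhn.

Section Hex.
(* The n-dimensional Hex theorem for a colouring [col] of the board
   {0..K}^n by the colours 0..n-1: some colour j has a king-path joining the
   faces x_j = K and x_j = 0.  The board is padded to {0..K+1}^n, a point with
   a coordinate j equal to K+1 getting colour j.  Labelling a point by j+1 when
   it is reached from the face x_j = K+1 by a j-coloured path, and by 0
   otherwise, is a Sperner labelling unless such a path already reaches
   x_j = 0; and a fully labelled simplex is impossible, since its 0-labelled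
   vertex would be reached through its king-adjacent vertex of label
   (its colour)+1. *)
Variables (n K : nat).
Variable col : {ffun 'I_n -> nat} -> nat.
Definition on_board (p : {ffun 'I_n -> nat}) := [forall i, p i <= K].
Hypothesis col_range : forall p, on_board p -> col p < n.

Definition king_adj (p q : {ffun 'I_n -> nat}) :=
  [forall i, (p i <= q i + 1) && (q i <= p i + 1)].

Definition ext_colour (p : {ffun 'I_n -> nat}) : nat :=
  if [pick i : 'I_n | K < p i] is Some i then (i : nat) else col p.

Inductive ext_path (c : nat) : {ffun 'I_n -> nat} -> {ffun 'I_n -> nat} -> Prop :=
 | ext_path0 p : in_grid K p -> ext_colour p = c -> ext_path c p p
 | ext_pathS p q r : in_grid K p -> ext_colour p = c -> king_adj p q ->
     ext_path c q r -> ext_path c p r.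

Inductive board_path (c : nat) : {ffun 'I_n -> nat} -> {ffun 'I_n -> nat} -> Prop :=
 | board_path0 p : on_board p -> col p = c -> board_path c p p
 | board_pathS p q r : on_board p -> col p = c -> king_adj p q ->
     board_path c q r -> board_path c p r.

Lemma ext_path_snoc c p q r : ext_path c p q -> king_adj q r ->
  in_grid K r -> ext_colour r = c -> ext_path c p r.
Proof.
elim => [a ca ea | a b d ca ea ab _ IH] qr cr er.
  exact: ext_pathS ca ea qr (ext_path0 cr er).
exact: ext_pathS ca ea ab (IH qr cr er).
Qed.

Lemma ext_path_end c q p : ext_path c q p -> in_grid K p /\ ext_colour p = c.
Proof. by elim. Qed.

Lemma ext_colour_on_board p : on_board p -> ext_colour p = col p.
Proof. by move=> /forallP h; rewrite /ext_colour; case: pickP => // i; rewrite ltnNge h. Qed.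

Lemma ext_colour_off_board p :
  ~~ on_board p -> exists i : 'I_n, K < p i /\ ext_colour p = i.
Proof.
rewrite negb_forall => /existsP [i hi]; rewrite /ext_colour.
by case: pickP => [i' hi'|/(_ i)]; [exists i' | rewrite ltnNge hi].
Qed.

Lemma vertex_king_adj (s : simplex K n) (t1 t2 : nat) :
  king_adj (vertex s t1) (vertex s t2).
Proof.
apply/forallP => i; rewrite !ffunE -!addnA !leq_add2l.
by case: (_ < t1); case: (_ < t2).
Qed.

Lemma ext_path_restrict (j : 'I_n) q p : ext_path j q p -> on_board p ->
  (exists z, [/\ on_board z, z j = K & board_path j z p]) \/
  (on_board q /\ board_path j q p).
Proof.
elim => [a ca ea | a b d ca ea ab _ IH] pO.
  by right; split => //; apply: board_path0 => //; rewrite -ext_colour_on_board.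
have [ex|[bO ob]] := IH pO; first by left.
have [aO|aO] := boolP (on_board a).
  by right; split => //; apply: board_pathS ab ob => //; rewrite -ext_colour_on_board.
left; exists b; split => //.
have [i [hi ei]] := ext_colour_off_board aO.
have ij : i = j by apply/val_inj; rewrite /= -ei ea.
subst i; move/forallP: ab => /(_ j) /andP [h1 _].
apply/eqP; rewrite eqn_leq (forallP bO j) /=.
have := ca j; rewrite leq_eqVlt ltnS leqNgt hi orbF => /eqP e.
by rewrite e addn1 ltnS in h1.
Qed.

Definition reaches (j : 'I_n) (p : {ffun 'I_n -> nat}) :=
  exists q : {ffun 'I_n -> nat}, q j = K.+1 /\ ext_path j q p.

Definition reachesb (j : 'I_n) (p : {ffun 'I_n -> nat}) : bool :=
  if excluded_middle_informative (reaches j p) then true else false.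

Lemma reachesP (j : 'I_n) (p : {ffun 'I_n -> nat}) : reachesb j p <-> reaches j p.
Proof. by rewrite /reachesb; case: excluded_middle_informative. Qed.

Definition hex_label (p : {ffun 'I_n -> nat}) : nat :=
  if [pick j : 'I_n | reachesb j p] is Some j then j.+1 else 0.

Lemma hex_label_sperner :
  ~ (exists (j : 'I_n) (q p : {ffun 'I_n -> nat}),
       [/\ q j = K.+1, ext_path j q p & p j = 0]) ->
  sperner K hex_label.
Proof.
move=> nohex; split.
- by move=> p _; rewrite /hex_label; case: pickP => // j _; exact: ltn_ord.
- move=> p i cp pi; rewrite /hex_label; case: pickP => // j /reachesP [q [qj fq]] [ji].
  have ij : j = i by apply/val_inj.
  by subst j; apply: nohex; exists i, q, p.
- move=> p i cp pi; rewrite /hex_label; case: pickP => // hn _.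
  have pO : ~~ on_board p.
    by rewrite negb_forall; apply/existsP; exists i; rewrite pi ltnn.
  have [i0 [hi0 ei0]] := ext_colour_off_board pO.
  suff : reachesb i0 p by rewrite hn.
  apply/reachesP; exists p; split; last exact: ext_path0.
  by apply/eqP; rewrite eqn_leq cp; exact: hi0.
Qed.

Lemma hex_extended : exists (j : 'I_n) (q p : {ffun 'I_n -> nat}),
  [/\ q j = K.+1, ext_path j q p & p j = 0].
Proof.
apply: NNPP => nohex.
have := kuhn (hex_label_sperner nohex).
have [-> | [s]] := set_0Vmem [set s : simplex K n | fully_labelled hex_label s].
  by rewrite cards0.
rewrite inE => /forallP fs _.
have /existsP [t0 /eqP l0] := fs ord0; set w := vertex s t0 in l0.
have cn : ext_colour w < n.
  have [wO|wO] := boolP (on_board w); first by rewrite ext_colour_on_board // col_range.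
  by have [i [_ ->]] := ext_colour_off_board wO.
have /existsP [t1 /eqP] := fs (@Ordinal n.+1 (ext_colour w).+1 cn).
rewrite /hex_label; case: pickP => // j /reachesP [q [qj fq]] [] ej.
have Rw : reachesb j w.
  apply/reachesP; exists q; split => //.
  by apply: (ext_path_snoc fq (vertex_king_adj s t1 t0) (vertex_in_grid s t0)); rewrite ej.
by move: l0; rewrite /hex_label; case: pickP => // /(_ j); rewrite Rw.
Qed.

Lemma hex_board : exists (j : 'I_n) (z p : {ffun 'I_n -> nat}),
  [/\ on_board z, z j = K, board_path j z p & p j = 0].
Proof.
have [j [q [p [qj fq pj]]]] := hex_extended.
have [cp ep] := ext_path_end fq.
have pO : on_board p.
  apply/negPn/negP => pO; have [i [hi ei]] := ext_colour_off_board pO.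
  have ij : i = j by apply/val_inj; rewrite /= -ei ep.
  by subst i; rewrite pj in hi.
have [[z [zO zj oz]] | [qO _]] := ext_path_restrict fq pO; first by exists j, z, p.
by move: (forallP qO j); rewrite qj ltnn.
Qed.

End Hex.

Theorem hex_theorem (n K : nat) (col : (nat -> nat) -> nat) :
  (forall x, in_cube n K x -> (col x < n)%coq_nat) ->
  exists (c j : nat) (z p : nat -> nat),
    (j < n)%coq_nat /\ z j = K /\ p j = 0 /\ king_path n K col c z p.
Proof.
case: n col => [|n] col hcol.
  by have /ltP := hcol (fun _ => 0) (fun i hi => False_ind _ (PeanoNat.Nat.nlt_0_r i hi)).
pose to_fun (p : {ffun 'I_n.+1 -> nat}) : nat -> nat := fun i => p (inord i).
have to_fun_in_cube p : on_board K p -> in_cube n.+1 K (to_fun p).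
  by move=> /forallP pO i /ltP hi; apply/leP; rewrite /to_fun; exact: pO.
have col_lt p : on_board K p -> col (to_fun p) < n.+1.
  by move=> /to_fun_in_cube /hcol /ltP.
have [j [z [p [zO zj oz pj]]]] := hex_board col_lt.
exists j, j, (to_fun z), (to_fun p); split; first exact/ltP.
rewrite /to_fun !inord_val; split => //; split => //.
elim: oz {zj pj zO} => [a aO ca | a b d aO ca ab _ IH].
  exact: king_path0 (to_fun_in_cube _ aO) ca.
apply: king_pathS (to_fun_in_cube _ aO) ca _ IH => i /ltP hi.
move/forallP: ab => /(_ (inord i)) /andP [h1 h2].
by split; apply/leP; rewrite /to_fun.
Qed.

End CubeHex.

Open Scope R_scope.

Lemma last_cons_default {A} (l : list A) a d d' :
  List.last (a :: l) d = List.last (a :: l) d'.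
Proof.
revert a; induction l as [|b l IH]; intros a; [reflexivity|].
exact (IH b).
Qed.

Lemma last_cons_In {A} (l : list A) a d : In (List.last (a :: l) d) (a :: l).
Proof.
revert a; induction l as [|b l IH]; intros a; [simpl; auto|].
right; exact (IH b).
Qed.

Section Chains.
Variables (X : Type) (d : X -> X -> R) (s : R) (U : X -> Prop).

Lemma s_chain_refl x : U x -> s_chain_in d s U x x.
Proof.
intros Ux; exists nil; cbn zeta; repeat split.
- intros w [<-|[]]; auto.
- intros i Hi; simpl in Hi; lia.
Qed.

Lemma s_chain_cons x y z :
  U x -> d x y < s -> s_chain_in d s U y z -> s_chain_in d s U x z.
Proof.
intros Ux dxy [l [HU [Hl Hn]]].
exists (y :: l); cbn zeta in *; repeat split.
- intros w [<-|Hw]; auto.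
- change (List.last (y :: l) x = z).
  rewrite (last_cons_default l y x y); exact Hl.
- intros [|i] Hi; [exact dxy|].
  simpl in Hi.
  change (d (nth i (y :: l) x) (nth (S i) (y :: l) x) < s).
  rewrite (nth_indep (y :: l) x y) by (simpl; lia).
  rewrite (nth_indep (y :: l) x y (n := S i)) by (simpl; lia).
  apply Hn; simpl; lia.
Qed.

Lemma s_chain_ends x y : s_chain_in d s U x y -> U x /\ U y.
Proof.
intros [l [HU [Hl _]]]; split.
- apply HU; left; reflexivity.
- rewrite <- Hl; apply HU, last_cons_In.
Qed.

End Chains.

Lemma l1_dist_nonneg n x y : 0 <= l1_dist n x y.
Proof.
induction n; simpl; [lra|].
pose proof (Rabs_pos (INR (x n) - INR (y n))); lra.
Qed.

Lemma l1_dist_ge_coord n x y j :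
  (j < n)%nat -> Rabs (INR (x j) - INR (y j)) <= l1_dist n x y.
Proof.
induction n; intros Hj; [lia|]; simpl.
pose proof (Rabs_pos (INR (x n) - INR (y n))).
destruct (Nat.eq_dec j n) as [->|Hne].
- pose proof (l1_dist_nonneg n x y); lra.
- pose proof (IHn ltac:(lia)); lra.
Qed.

Lemma l1_dist_king n x y :
  (forall i, (i < n)%nat -> (x i <= y i + 1)%nat /\ (y i <= x i + 1)%nat) ->
  l1_dist n x y <= INR n.
Proof.
induction n; intros H; [simpl; lra|].
change (l1_dist (S n) x y) with (l1_dist n x y + Rabs (INR (x n) - INR (y n))).
pose proof (IHn (fun i Hi => H i ltac:(lia))) as IH.
destruct (H n ltac:(lia)) as [h1 h2].
apply le_INR in h1; apply le_INR in h2; rewrite plus_INR in h1, h2; simpl in h1, h2.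
assert (Rabs (INR (x n) - INR (y n)) <= 1) by (apply Rabs_le; lra).
rewrite S_INR; lra.
Qed.

Section DilatedCube.
Variables (X : Type) (d : X -> X -> R) (n K : nat) (C : R) (f : (nat -> nat) -> X).
Hypothesis C_nonneg : 0 <= C.
Hypothesis f_dilation : forall x y, in_cube n K x -> in_cube n K y ->
  d (f x) (f y) = C * l1_dist n x y.

Lemma dilated_cube_faces_far j z p :
  (j < n)%nat -> in_cube n K z -> in_cube n K p -> z j = K -> p j = 0%nat ->
  C * INR K <= d (f z) (f p).
Proof.
intros Hj Hz Hp Hzj Hpj; rewrite (f_dilation z p Hz Hp).
pose proof (l1_dist_ge_coord n z p j Hj) as Hl1.
rewrite Hzj, Hpj, Rminus_0_r, Rabs_right in Hl1 by apply Rle_ge, pos_INR.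
apply Rmult_le_compat_l; assumption.
Qed.

Lemma king_path_s_chain (s : R) (U : nat -> X -> Prop) (colX : X -> nat) c z p :
  C * INR n < s -> (forall y, U (colX y) y) ->
  king_path n K (fun x => colX (f x)) c z p ->
  in_cube n K z /\ in_cube n K p /\ s_chain_in d s (U c) (f z) (f p).
Proof.
intros Hs HU Hpath.
induction Hpath as [x Hx Hcx | x y w Hx Hcx Hadj Hyw IH].
- subst c; repeat split; auto; apply s_chain_refl, HU.
- destruct IH as (Hy & Hw & Hchain); repeat split; auto.
  + apply (s_chain_cons _ d s (U c) (f x) (f y)); auto.
    * subst c; apply HU.
    * rewrite (f_dilation x y Hx Hy).
      pose proof (l1_dist_king n x y Hadj); nra.
Qed.

End DilatedCube.

Lemma cover_colouring {X : Type} (U : nat -> X -> Prop) (m : nat) :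
  (forall x, exists i, (i <= m)%nat /\ U i x) ->
  exists colX : X -> nat, forall x, (colX x <= m)%nat /\ U (colX x) x.
Proof.
intros H.
exists (fun x => proj1_sig (constructive_indefinite_description _ (H x))).
intros x; exact (proj2_sig (constructive_indefinite_description _ (H x))).
Qed.

Theorem corollary2p8 (X : Type) (d : X -> X -> R) (n : nat)
    (k : nat -> nat) (f : nat -> (nat -> nat) -> X) :
  is_metric d ->
  (forall m, dilated_cube d n (k m) (f m)) ->
  (forall B : nat, exists M : nat, forall m, (M <= m)%nat -> (B <= k m)%nat) ->
  asdimAN_ge d n.
Proof.
intros _ Hcube Hk m Hm [C' [k0 [HC' [_ Hcov]]]].
(* A cube whose side K exceeds C'(n+1) + |k0|, and the scale s = C(n+1). *)
destruct (INR_unbounded (C' * (INR n + 1) + Rabs k0)) as [B HB].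
destruct (Hk B) as [M HM]; specialize (HM M (le_n M)); apply le_INR in HM.
destruct (Hcube M) as [C [HC1 Hiso]].
set (s := C * (INR n + 1)).
assert (Hs : 0 < s) by (unfold s; pose proof (pos_INR n); nra).
destruct (Hcov s Hs) as [U [HUc HUb]].
destruct (cover_colouring U m HUc) as [colX HcolX].
(* Hex: a monochromatic king-path crosses the cube along some axis j. *)
assert (Hcolours : forall x, in_cube n (k M) x -> (colX (f M x) < n)%nat)
  by (intros x _; pose proof (HcolX (f M x)); lia).
destruct (@CubeHex.hex_theorem n (k M) (fun x => colX (f M x)) Hcolours)
  as (c & j & z & p & Hj & Hzj & Hpj & Hpath).
destruct (king_path_s_chain X d n (k M) C (f M) ltac:(lra) Hiso s U colX c z p
            ltac:(unfold s; nra) (fun y => proj2 (HcolX y)) Hpath) as (Hz & Hp & Hchain).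
assert (Hc : (c <= m)%nat) by (inversion Hpath; subst c; apply HcolX).
destruct (s_chain_ends _ d s (U c) _ _ Hchain) as [Hzc Hpc].
(* Its ends are C K apart yet lie in one s-component of U_c. *)
pose proof (dilated_cube_faces_far X d n (k M) C (f M) ltac:(lra) Hiso j z p Hj Hz Hp Hzj Hpj) as Hfar.
pose proof (HUb c Hc (f M z) (f M p) Hzc Hpc Hchain) as Hnear.
assert (Habs : k0 <= C * Rabs k0)
  by (pose proof (Rle_abs k0); pose proof (Rabs_pos k0); nra).
assert (HCK : C * INR (k M) <= C * (C' * (INR n + 1) + Rabs k0))
  by (unfold s in Hnear; nra).
apply Rmult_le_reg_l in HCK; lra.
Qed.
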